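(* Let $G$ act by homeomorphisms on a Hausdorff space $M$. For any finite subset $F\subset G$ and any finitary point coders $\mathcal{Q},\mathcal{Q}'$ for this action, there is $N\in\mathbb{N}$ such that the following holds. Let $(g_0,\mathbf c)$ be a generalized $\mathcal{Q}'$-coding of a point $p\in M$ with path sequence $(g_k)_{k\ge0}$ and terminal vertex sequence $(z_k)_{k\ge1}$, and let $(h_0,\mathbf d)$ be a generalized $\mathcal{Q}$-coding of the same point $p$ with path sequence $(h_k)_{k\ge0}$ and terminal vertex sequence $(y_k)_{k\ge1}$. Then for all $m,n\in\mathbb{N}$ with $g_n^{-1}h_m\in F$, \[g_{n+N}\,\overline{W(z_{n+N})}\subset h_mW(y_m).\]
   Context: A finitary point coder $\mathcal{Q}$ for an action of a group $G$ by homeomorphisms on a Hausdorff space $M$ consists of a finite collection of open subsets of $M$, a finite subset $F(\mathcal{Q})\subset G$, and a finite directed graph whose vertices $v$ are labeled by open sets $W(v)$ from that collection and whose edges $e$ are labeled by elements $\mathrm{Lab}(e)\in F(\mathcal{Q})$, such that: (a) whenever there is an edge from $z_1$ to $z_2$ labeled $\alpha$, $\alpha\overline{W(z_2)}\subset W(z_1)$; (b) for every infinite edge path $\mathbf e=(e_k)_{k\ge1}$ with $z_k=\tau(e_k)$ (terminal vertex of $e_k$) and $\alpha_k=\mathrm{Lab}(e_k)$, the sets $\alpha_1\cdots\alpha_nW(z_n)$, $n\in\mathbb{N}$, form a neighborhood basis of some point $p\in M$; such a path is called a strict $\mathcal{Q}$-coding of $p$. A generalized $\mathcal{Q}$-coding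 is a pair $(g_0,\mathbf e)$ with $g_0\in G$ and $\mathbf e$ a strict $\mathcal{Q}$-coding; if $\mathbf e$ codes $p$, then $(g_0,\mathbf e)$ codes $g_0p$. Its terminal vertex sequence is that of $\mathbf e$, and its path sequence is $g_k:=g_0\alpha_1\cdots\alpha_k$, $k\ge0$. *)

From HB Require Import structures.
From mathcomp Require Import all_boot all_order all_algebra.
From mathcomp Require Import all_classical all_reals topology.
Set Implicit Arguments. Unset Strict Implicit. Unset Printing Implicit Defensive.
Local Open Scope classical_set_scope.
Local Open Scope group_scope.

(* [act] is an action of G on M by homeomorphisms (each act g is continuous,
   with continuous inverse act g^-1 by the action axioms). *)
Definition action_by_homeos (G : groupType) (M : topologicalType)
  (act : G -> M -> M) : Prop :=
  (forall x, act 1 x = x) /\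
  (forall g h x, act (g * h) x = act g (act h x)) /\
  (forall g, continuous (act g)).

(* A finitary point coder: finite directed graph (finite vertex type [cV],
   finite edge type [cE], source/target maps), vertex labels [cW] by open sets
   (a finite collection, being indexed by a finite type), edge labels [cLab]
   in G (F(Q) = image of cLab, finite).  Infinite edge paths are indexed
   from 0: [e k] is the paper's e_{k+1}. *)
Record point_coder (G : groupType) (M : topologicalType) (act : G -> M -> M) :=
  PointCoder {
  cV : finType;
  cE : finType;
  csrc : cE -> cV;
  ctgt : cE -> cV;
  cW : cV -> set M;
  cLab : cE -> G }.

Section Coding.
Variables (G : groupType) (M : topologicalType) (act : G -> M -> M).
Variable Q : point_coder act.

Definition edge_path (e : nat -> cE Q) : Prop :=
  forall k, ctgt (e k) = csrc (e k.+1).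

Fixpoint path_seq (g0 : G) (e : nat -> cE Q) (k : nat) : G :=
  match k with
  | 0 => g0
  | k'.+1 => path_seq g0 e k' * cLab (e k')
  end.

(* terminal vertex sequence z_k = tau(e_k), meaningful for k >= 1 *)
Definition term_vertex (e : nat -> cE Q) (k : nat) : cV Q := ctgt (e k.-1).

Definition nbhs_basis (p : M) (B : nat -> set M) : Prop :=
  (forall n, (0 < n)%N -> nbhs p (B n)) /\
  (forall U, nbhs p U -> exists2 n, (0 < n)%N & B n `<=` U).

Definition strict_codes (e : nat -> cE Q) (p : M) : Prop :=
  edge_path e /\
  nbhs_basis p (fun n => act (path_seq 1 e n) @` cW (term_vertex e n)).

Definition gen_codes (g0 : G) (e : nat -> cE Q) (p : M) : Prop :=
  exists2 q, strict_codes e q & act g0 q = p.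

Definition is_finitary_point_coder : Prop :=
  (forall v : cV Q, open (cW v)) /\
  (forall ed : cE Q, act (cLab ed) @` closure (cW (ctgt ed)) `<=` cW (csrc ed)) /\
  (forall e, edge_path e -> exists p, strict_codes e p).

End Coding.

From HB Require Import structures.
From mathcomp Require Import all_boot all_order all_algebra.
From mathcomp Require Import all_classical all_reals topology.
From mathcomp Require Import finmap.
Local Open Scope classical_set_scope.
Local Open Scope group_scope.
Set Implicit Arguments. Unset Strict Implicit. Unset Printing Implicit Defensive.

(* Fix f in G.  If no depth N works for f, then for every N there are edge
   paths c_N, d_N such that a point coded by c_N is f times a point coded by
   d_N, yet the N-th cylinder of c_N is not inside f W(source of d_N).  The
   coding graphs being finite, Koenig's lemma gives limit paths c, d each
   prefix of which is shared by infinitely many (c_N, d_N).  They code points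
   q, q' with q = f q' by the Hausdorff property, so the open set
   f W(source of d) is a neighbourhood of q and contains a cylinder of c, hence
   the deep cylinders of the c_N sharing that prefix: a contradiction.  A bound
   on the depths of the finitely many f in F then works for the theorem,
   applied to the codings shifted by n and m. *)

Section Koenig.
Variables (T : finType) (s : nat -> nat -> T).

Definition cofinal (S : set nat) := forall K, exists2 N, (K <= N)%N & S N.

Lemma cofinal_fiber (S : set nat) (x : nat -> T) :
  cofinal S -> exists t, cofinal (S `&` [set N | x N = t]).
Proof.
move=> cofS; apply: contrapT => no_fiber.
have fiber_bound t : exists K, forall N, (K <= N)%N -> S N -> x N <> t.
  apply: contrapT => nK; apply: no_fiber; exists t => K.
  apply: contrapT => nN; apply: nK; exists K => N KN SN xNt.
  by apply: nN; exists N.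
have [K HK] := choice fiber_bound.
have [N KN SN] := cofS (\max_(t : T) K t)%N.
apply: (HK (x N) N) => //.
exact: leq_trans (leq_bigmax (x N)) KN.
Qed.

Definition koenig_value (S : set nat) (k : nat) : T :=
  xget (s 0%N 0%N) (fun t => cofinal (S `&` [set N | s N k = t])).

Fixpoint koenig_set (k : nat) : set nat :=
  if k is k'.+1 then
    koenig_set k' `&` [set N | s N k' = koenig_value (koenig_set k') k']
  else setT.

Lemma cofinal_koenig_set k : cofinal (koenig_set k).
Proof.
elim: k => [|k IH] /=; first by move=> K; exists K.
have [t Ht] := cofinal_fiber (fun N => s N k) IH.
by rewrite /koenig_value; case: xgetP => [//|no_t]; case: (no_t t).
Qed.

Lemma koenig_setP k N : koenig_set k N ->
  forall i, (i < k)%N -> s N i = koenig_value (koenig_set i) i.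
Proof.
elim: k => [|k IH] //= [Nk sNk] i.
by rewrite ltnS leq_eqVlt => /orP[/eqP -> //|]; exact: IH.
Qed.

Lemma koenig_limit : exists l : nat -> T,
  forall k K, exists2 N, (K <= N)%N & forall i, (i < k)%N -> s N i = l i.
Proof.
exists (fun i => koenig_value (koenig_set i) i) => k K.
have [N KN HN] := cofinal_koenig_set k K.
by exists N => //; exact: koenig_setP.
Qed.

End Koenig.

Lemma finite_set_nat_ubound (S : set nat) :
  finite_set S -> exists n, forall k, S k -> (k <= n)%N.
Proof.
move=> finS; exists (\max_(k <- finmap.enum_fset (fset_set S)) k)%N => k Sk.
apply: (@leq_bigmax_seq _ _ xpredT id) => //.
by have : k \in fset_set S by rewrite in_fset_set //; apply/mem_set.
Qed.

Lemma nbhs_basis_image_eq (M : topologicalType) (g : M -> M)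
    (p q : M) (A B : nat -> set M) :
  hausdorff_space M -> continuous g ->
  nbhs_basis p A -> nbhs_basis q B ->
  (forall i j, (0 < i)%N -> (0 < j)%N -> A i `&` (g @` B j) !=set0) ->
  p = g q.
Proof.
move=> HM g_cont [_ A_basis] [_ B_basis] meet; apply: HM => U V pU gqV.
have [i i0 AiU] := A_basis U pU.
have [j j0 BjV] := B_basis _ (g_cont q V gqV).
have [x [Aix [w Bjw gwx]]] := meet i j i0 j0.
by exists x; split; [exact: AiU | rewrite -gwx; exact: BjV].
Qed.

Section Action.
Variables (G : groupType) (M : topologicalType) (act : G -> M -> M).
Hypothesis Hact : action_by_homeos act.

Lemma act1 x : act 1 x = x.
Proof. exact: Hact.1. Qed.

Lemma actM g h x : act (g * h) x = act g (act h x).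
Proof. exact: Hact.2.1. Qed.

Lemma act_continuous g : continuous (act g).
Proof. exact: Hact.2.2. Qed.

Lemma actK g x : act g^-1 (act g x) = x.
Proof. by rewrite -actM mulVg act1. Qed.

Lemma actVK g x : act g (act g^-1 x) = x.
Proof. by rewrite -actM mulgV act1. Qed.

Lemma open_act_image g (A : set M) : open A -> open (act g @` A).
Proof.
have -> : act g @` A = act g^-1 @^-1` A.
  apply/seteqP; split => [y [x Ax <-]|y Ay]; first by rewrite /= actK.
  by exists (act g^-1 y); rewrite ?actVK.
by apply: open_comp => // y _; exact: act_continuous.
Qed.

End Action.

Section Paths.
Variables (G : groupType) (M : topologicalType) (act : G -> M -> M).
Variable Q : point_coder act.
Implicit Types (c d : nat -> cE Q).

Definition drop_path (n : nat) c i := c (n + i)%N.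

Definition cylinder c k := act (path_seq 1 c k) @` cW (term_vertex c k).

Definition closed_cylinder c k :=
  act (path_seq 1 c k) @` closure (cW (term_vertex c k)).

Lemma path_seq_mull g0 c k : path_seq g0 c k = g0 * path_seq 1 c k.
Proof. by elim: k => [|k IH] /=; rewrite ?mulg1 // IH mulgA. Qed.

Lemma path_seq_addn g0 c n k :
  path_seq g0 c (n + k) = path_seq g0 c n * path_seq 1 (drop_path n c) k.
Proof. by elim: k => [|k IH] /=; rewrite ?addn0 ?mulg1 // addnS /= IH mulgA. Qed.

Lemma term_vertex_addn c n k : (0 < k)%N ->
  term_vertex c (n + k) = term_vertex (drop_path n c) k.
Proof. by case: k => // k _; rewrite /term_vertex addnS. Qed.

Lemma edge_path_drop n c : edge_path c -> edge_path (drop_path n c).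
Proof. by move=> ec k; rewrite /drop_path addnS. Qed.

Lemma edge_path_prefixes c :
  (forall k, exists2 c', edge_path c' & forall i, (i < k)%N -> c' i = c i) ->
  edge_path c.
Proof.
move=> prefixes k; have [c' ec' c'c] := prefixes k.+2.
by rewrite -!c'c //; apply: ec'.
Qed.

Lemma eq_path_seq c c' k : (forall i, (i < k)%N -> c i = c' i) ->
  path_seq 1 c k = path_seq 1 c' k.
Proof.
elim: k => [|k IH] //= cc'.
by rewrite IH ?cc' // => i ik; apply: cc'; exact: ltnW.
Qed.

Lemma term_vertexE c k : edge_path c -> (0 < k)%N -> term_vertex c k = csrc (c k).
Proof. by move=> ec k0; rewrite /term_vertex ec prednK. Qed.

Section Prefix.
Variables (c c' : nat -> cE Q) (k : nat).
Hypothesis (k_gt0 : (0 < k)%N) (cc' : forall i, (i < k)%N -> c i = c' i).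

Lemma eq_term_vertex : term_vertex c k = term_vertex c' k.
Proof. by case: k k_gt0 cc' => // j _ cc'j; rewrite /term_vertex /= cc'j. Qed.

Lemma eq_cylinder : cylinder c k = cylinder c' k.
Proof. by rewrite /cylinder (eq_path_seq cc') eq_term_vertex. Qed.

End Prefix.

Lemma cylinder_sub_closed c k : cylinder c k `<=` closed_cylinder c k.
Proof. by move=> y [w Ww <-]; exists w => //; exact: subset_closure. Qed.

Hypothesis Hact : action_by_homeos act.
Hypothesis HQ : is_finitary_point_coder Q.

Lemma closed_cylinderS c k : edge_path c -> (0 < k)%N ->
  closed_cylinder c k.+1 `<=` cylinder c k.
Proof.
move=> ec k0 y [w Ww <-]; rewrite /= (actM Hact).
exists (act (cLab (c k)) w) => //.
by rewrite term_vertexE //; case: HQ => _ [HQa _]; apply: HQa; exists w.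
Qed.

Lemma cylinder_le c k k' : edge_path c -> (0 < k)%N -> (k <= k')%N ->
  cylinder c k' `<=` cylinder c k.
Proof.
move=> ec k0 /subnKC <-; elim: (k' - k)%N => [|j IH]; first by rewrite addn0.
rewrite addnS => y ckjy; apply/IH/(closed_cylinderS ec); last exact: cylinder_sub_closed.
by rewrite addn_gt0 k0.
Qed.

Lemma closed_cylinder_le c k k' : edge_path c -> (0 < k)%N -> (k < k')%N ->
  closed_cylinder c k' `<=` cylinder c k.
Proof.
case: k' => // k' ec k0 kk' y cy.
exact: (cylinder_le ec k0 kk' (closed_cylinderS ec (leq_trans k0 kk') cy)).
Qed.

Lemma strict_codes_src d q : strict_codes d q -> cW (csrc (d 0%N)) q.
Proof.
case=> _ [nbhs_cyl _]; have [w Ww <-] := nbhs_singleton (nbhs_cyl 1%N isT).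
rewrite /= mul1g; case: HQ => _ [HQa _]; apply: HQa; exists w => //.
exact: subset_closure.
Qed.

Lemma gen_codes_drop g0 c p n k : gen_codes g0 c p -> (0 < n)%N -> (0 < k)%N ->
  cylinder (drop_path n c) k (act (path_seq g0 c n)^-1 p).
Proof.
move=> [q [_ [nbhs_cyl _]] <-] n0 k0.
have [w Ww <-] := nbhs_singleton (nbhs_cyl (n + k)%N (ltn_addr _ n0)).
exists w; first by rewrite -term_vertex_addn.
by rewrite path_seq_addn (path_seq_mull g0) -!(actM Hact) invgM !mulgA mulgVK
  mulVg mul1g.
Qed.

End Paths.

Section Depth.
Variables (G : groupType) (M : topologicalType) (act : G -> M -> M).
Variables Q Q' : point_coder act.
Hypotheses (Hact : action_by_homeos act) (HM : hausdorff_space M).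
Hypotheses (HQ : is_finitary_point_coder Q) (HQ' : is_finitary_point_coder Q').

Definition absorbing_depth (f : G) (N : nat) : Prop :=
  forall (c : nat -> cE Q') (d : nat -> cE Q) (x : M),
  edge_path c -> edge_path d ->
  (forall k, (0 < k)%N -> cylinder c k x) ->
  (forall k, (0 < k)%N -> (act f @` cylinder d k) x) ->
  cylinder c N `<=` act f @` cW (csrc (d 0%N)).

Lemma absorbing_depth_exists f : exists N, (0 < N)%N /\ absorbing_depth f N.
Proof.
apply: contrapT => no_depth.
have bad N : exists cd : (nat -> cE Q') * (nat -> cE Q), exists x y,
    [/\ edge_path cd.1, edge_path cd.2,
        (forall k, (0 < k)%N -> cylinder cd.1 k x),
        (forall k, (0 < k)%N -> (act f @` cylinder cd.2 k) x)
        & cylinder cd.1 N.+1 y /\ ~ (act f @` cW (csrc (cd.2 0%N))) y].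
  apply: contrapT => no_bad; apply: no_depth; exists N.+1; split => //.
  move=> c d x ec ed cx dx y cy; apply: contrapT => not_y; apply: no_bad.
  by exists (c, d), x, y.
have [cd bad_cd] := choice bad.
have [l near_l] := koenig_limit (fun N i => ((cd N).1 i, (cd N).2 i)).
pose c i := (l i).1; pose d i := (l i).2.
have near_limit k K : exists2 N, (K <= N)%N &
    (forall i, (i < k)%N -> (cd N).1 i = c i) /\
    (forall i, (i < k)%N -> (cd N).2 i = d i).
  have [N KN HN] := near_l k K; exists N => //.
  by split => i /HN eq_i; rewrite /c /d -eq_i.
have ec : edge_path c.
  apply: edge_path_prefixes => k; have [N _ [cN _]] := near_limit k 0%N.
  by have [_ [_ [ecN _ _ _ _]]] := bad_cd N; exists (cd N).1.
have ed : edge_path d.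
  apply: edge_path_prefixes => k; have [N _ [_ dN]] := near_limit k 0%N.
  by have [_ [_ [_ edN _ _ _]]] := bad_cd N; exists (cd N).2.
have [q cq] := HQ'.2.2 c ec; have [q' dq'] := HQ.2.2 d ed.
have q_eq : q = act f q'.
  apply: (nbhs_basis_image_eq (A := cylinder c) (B := cylinder d) HM
    (act_continuous Hact (g := f)) cq.2 dq'.2) => i j i0 j0.
  have [N _ [cN dN]] := near_limit (i + j)%N 0%N.
  have [x [_ [_ _ cx dx _]]] := bad_cd N.
  exists x; split.
    by rewrite -(eq_cylinder i0 (fun k ki => cN k (ltn_addr j ki))); exact: cx.
  by rewrite -(eq_cylinder j0 (fun k kj => dN k (ltn_addl i kj))); exact: dx.
have U_nbhs : nbhs q (act f @` cW (csrc (d 0%N))).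
  apply: open_nbhs_nbhs; split; first exact/(open_act_image Hact)/HQ.1.
  by rewrite q_eq; exists q' => //; exact: strict_codes_src dq'.
have [k k0 ck_sub] := cq.2.2 _ U_nbhs.
have [N kN [cN dN]] := near_limit k k.
have [_ [y [ecN _ _ _ [cNy not_y]]]] := bad_cd N.
apply: not_y; rewrite (dN 0%N k0); apply: ck_sub.
by move: (cylinder_le Hact HQ' ecN k0 (leqW kN) cNy); rewrite (eq_cylinder k0 cN).
Qed.

End Depth.

Theorem lemmaA1 (G : groupType) (M : topologicalType) (act : G -> M -> M)
  (Hact : action_by_homeos act) (HM : hausdorff_space M)
  (F : set G) (HF : finite_set F)
  (Q Q' : point_coder act)
  (HQ : is_finitary_point_coder Q) (HQ' : is_finitary_point_coder Q') :
  exists N : nat,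
    forall (p : M) (g0 : G) (c : nat -> cE Q') (h0 : G) (d : nat -> cE Q),
      gen_codes g0 c p -> gen_codes h0 d p ->
      forall m n : nat, (0 < m)%N -> (0 < n)%N ->
        F ((path_seq g0 c n)^-1 * path_seq h0 d m) ->
        act (path_seq g0 c (n + N)) @` closure (cW (term_vertex c (n + N)))
        `<=` act (path_seq h0 d m) @` cW (term_vertex d m).
Proof.
have [Nf HNf] := choice (absorbing_depth_exists Hact HM HQ HQ').
have [b Hb] := finite_set_nat_ubound (finite_image Nf HF).
exists b.+1 => p g0 c h0 d gc hd m n m0 n0 Ff y [z Wz <-].
pose f := (path_seq g0 c n)^-1 * path_seq h0 d m.
have [Nf0 depth_f] := HNf f.
have Nf_lt : (Nf f < b.+1)%N by apply/Hb; exists f.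
have ec : edge_path c by case: gc => q [].
have ed : edge_path d by case: hd => q [].
have x_c := gen_codes_drop Hact gc n0.
have x_d k : (0 < k)%N ->
    (act f @` cylinder (drop_path m d) k) (act (path_seq g0 c n)^-1 p).
  move=> k0; exists (act (path_seq h0 d m)^-1 p); first exact: gen_codes_drop.
  by rewrite -(actM Hact) -mulgA mulgV mulg1.
have z_cyl : closed_cylinder (drop_path n c) b.+1
    (act (path_seq g0 c n)^-1 (act (path_seq g0 c (n + b.+1)) z)).
  rewrite path_seq_addn (actM Hact) actK //.
  by exists z => //; rewrite -term_vertex_addn.
have [w Ww fw] := depth_f _ _ _ (edge_path_drop n ec) (edge_path_drop m ed)
  x_c x_d _ (closed_cylinder_le Hact HQ' (edge_path_drop n ec) Nf0 Nf_lt z_cyl).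
exists w; first by rewrite term_vertexE //; move: Ww; rewrite /drop_path addn0.
have -> : path_seq h0 d m = path_seq g0 c n * f by rewrite /f mulVKg.
by rewrite (actM Hact) fw actVK.
Qed.
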